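(* Let $p$ be a prime and let $r\geq 2$ be an integer with $p\nmid r$. For integers $e\geq 2$ let $S(p,e,r)$ be the smallest set of positive integers such that (a) $r\in S$; (b) $n\in S$ whenever $n^e\in S$; (c) $(n+p)^e\in S$ whenever $n\in S$. Then there exists an integer $e$ with $2\leq e\leq p-2$ such that $S(p,e,r)=\{n\geq 2: n\not\equiv 0\pmod p\}$ if and only if $p-1$ is not squarefree.
   Context: ''Smallest'' means contained in every set of positive integers satisfying (a), (b), (c). *)

From mathcomp Require Import all_boot.
Set Implicit Arguments. Unset Strict Implicit. Unset Printing Implicit Defensive.

Definition closed_set (p e r : nat) (T : nat -> Prop) : Prop :=
  [/\ (forall n, T n -> 0 < n),
      T r,
      (forall n, 0 < n -> T (n ^ e) -> T n)
    & (forall n, T n -> T ((n + p) ^ e))].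

Definition S (p e r : nat) (n : nat) : Prop :=
  forall T, closed_set p e r T -> T n.

Definition squarefree (n : nat) : Prop :=
  forall d, 1 < d -> ~~ (d ^ 2 %| n).

From mathcomp Require Import all_boot all_algebra finfield zify.
From Stdlib Require Import Classical.
Import GRing.Theory.

Set Implicit Arguments.
Unset Strict Implicit.
Unset Printing Implicit Defensive.

(* If p - 1 = c d^2 with d > 1, take e = c d, so that p - 1 divides e^2.  A
   closed set contains r' = ((r + p)^e + p)^e = r^(e^2) = 1 (mod p), and with x
   it contains x + p (as (x + p)^e lies in it); hence it contains every
   n^(e^j) >= r' with j >= 2, since these are also 1 modulo p, and then n.
   Conversely, if p - 1 is squarefree and 2 <= e <= p - 2, some prime q divides
   p - 1 but not e.  Raising to the power e then preserves the q-th power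
   residues modulo p, and so does adding p; hence the elements of S(p, e, r)
   are all q-th power residues or all non-residues, and S(p, e, r) misses some
   n >= 2 prime to p. *)

Section ClosedSet.

Variables (p e r : nat) (T : nat -> Prop).
Hypothesis T_closed : closed_set p e r T.

Lemma closed_set_addn x : T x -> T (x + p).
Proof.
case: T_closed => T_gt0 _ T_root T_step Tx.
by apply: T_root (T_step x Tx); rewrite addn_gt0 T_gt0.
Qed.

Lemma closed_set_addMn k x : T x -> T (x + k * p).
Proof.
elim: k x => [|k IHk] x Tx; first by rewrite addn0.
by rewrite mulSn addnA; apply/IHk/closed_set_addn.
Qed.

Lemma closed_set_modn x y : T x -> x <= y -> x = y %[mod p] -> T y.
Proof.
move=> Tx le_xy eq_xy.
have /dvdnP[k def_k] : p %| y - x by rewrite -eqn_mod_dvd // eq_xy.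
by rewrite -(subnKC le_xy) def_k; apply: closed_set_addMn.
Qed.

Lemma closed_set_iter_root j x : 0 < x -> T (x ^ (e ^ j)) -> T x.
Proof.
case: T_closed => _ _ T_root _.
elim: j x => [|j IHj] x x_gt0; first by rewrite expn0 expn1.
rewrite expnS expnM => Tx; apply: T_root => //.
by apply: IHj; rewrite ?expn_gt0 ?x_gt0.
Qed.

End ClosedSet.

Lemma closed_set_ge2_ndvd p e r : prime p -> 0 < e -> 2 <= r -> ~~ (p %| r) ->
  closed_set p e r (fun n => 2 <= n /\ ~~ (p %| n)).
Proof.
move=> p_pr e_gt0 r_ge2 p_ndvd_r; split=> //.
- by move=> n [n_ge2 _]; apply: ltnW.
- move=> n n_gt0 [nX_ge2 p_ndvd_nX]; split.
    by case: n {p_ndvd_nX} n_gt0 nX_ge2 => [|[|n]] // _; rewrite exp1n.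
  by apply: contra p_ndvd_nX => p_dvd_n; rewrite Euclid_dvdX // p_dvd_n e_gt0.
- move=> n [n_ge2 p_ndvd_n]; split.
    rewrite (leq_trans n_ge2) // (leq_trans (leq_addr p n)) //.
    by rewrite -{1}[n + p]expn1 leq_pexp2l // addn_gt0 ltnW.
  by rewrite Euclid_dvdX // negb_and dvdn_addl // p_ndvd_n.
Qed.

Lemma S_ge2_ndvd p e r n : prime p -> 0 < e -> 2 <= r -> ~~ (p %| r) ->
  S p e r n -> 2 <= n /\ ~~ (p %| n).
Proof.
move=> p_pr e_gt0 r_ge2 p_ndvd_r /(_ (fun n => 2 <= n /\ ~~ (p %| n))).
by apply; apply: closed_set_ge2_ndvd.
Qed.

Section PrimeFieldPowers.

Local Open Scope ring_scope.

Lemma expr_coprime_eq1 (R : pzRingType) (y : R) q e : (0 < q)%N -> coprime q e ->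
  y ^+ q = 1 -> (y ^+ e == 1) = (y == 1).
Proof.
move=> q_gt0 co_qe yq1; apply/eqP/eqP => [ye1|->]; last exact: expr1n.
have [a _ /dvdnP[b def_b]] := Bezoutl e q_gt0.
rewrite (eqP co_qe) in def_b.
have : y ^+ (1 + a * e) = 1 by rewrite def_b mulnC exprM yq1 expr1n.
by rewrite exprD expr1 mulnC exprM ye1 expr1n mulr1.
Qed.

Lemma expf_card_pred (F : finFieldType) (x : F) : x != 0 -> x ^+ #|F|.-1 = 1.
Proof.
move=> x_neq0; apply: (mulfI x_neq0).
by rewrite mulr1 -exprS prednK ?expf_card // ltnW ?finNzRing_gt1.
Qed.

Lemma exists_expf_neq1 (F : finFieldType) k : (0 < k < #|F|.-1)%N ->
  exists2 x : F, x != 0 & x ^+ k != 1.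
Proof.
case/andP=> k_gt0 k_lt.
have : ~~ all (fun x : F => k.-unity_root x) (enum (predC1 0)).
  apply: contraL k_lt => all_roots.
  have := max_unity_roots k_gt0 all_roots (enum_uniq _).
  by rewrite -cardE cardC1 leqNgt.
by case/allPn=> x; rewrite mem_enum unity_rootE => x_neq0 x_not; exists x.
Qed.

Variable p : nat.
Hypothesis p_prime : prime p.

Lemma Fp_nat_addn a : ((a + p)%:R : 'F_p) = a%:R.
Proof. by rewrite natrD pchar_Fp_0 // addr0. Qed.

Lemma Fp_nat_eq_modn x y : (x%:R : 'F_p) = y%:R -> x = y %[mod p].
Proof. by rewrite -!(val_Fp_nat p_prime) => ->. Qed.

Lemma Fp_nat_eq0 n : ((n%:R : 'F_p) == 0) = (p %| n)%N.
Proof. by rewrite (dvdn_pcharf (pchar_Fp p_prime)). Qed.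

Lemma Fp_nat_expr_eq1 n m : ~~ (p %| n)%N -> (p.-1 %| m)%N -> (n%:R : 'F_p) ^+ m = 1.
Proof.
move=> p_ndvd_n /dvdnP[c ->].
have := @expf_card_pred _ (n%:R : 'F_p); rewrite card_Fp // Fp_nat_eq0 => fermat.
by rewrite mulnC exprM fermat // expr1n.
Qed.

End PrimeFieldPowers.

Lemma ge2_ndvd_S p e r n : prime p -> 1 < e -> p.-1 %| e ^ 2 -> ~~ (p %| r) ->
  2 <= n -> ~~ (p %| n) -> S p e r n.
Proof.
move=> p_pr e_gt1 dvd_e2 p_ndvd_r n_ge2 p_ndvd_n T T_closed.
have [_ Tr _ T_step] := T_closed.
set x := ((r + p) ^ e + p) ^ e.
have Tx : T x by apply/T_step/T_step.
have x_eq1 : (x%:R : 'F_p)%R = 1%R.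
  rewrite natrX Fp_nat_addn // natrX Fp_nat_addn // -exprM mulnn.
  exact: Fp_nat_expr_eq1.
have le_x : x <= n ^ (e ^ x.+2).
  have := ltn_expl x e_gt1; have := ltn_expl (e ^ x.+2) n_ge2.
  have : e ^ x <= e ^ x.+2 by rewrite leq_pexp2l // ltnW.
  lia.
apply: (closed_set_iter_root T_closed (j := x.+2)); first exact: ltnW.
apply: (closed_set_modn T_closed Tx le_x); apply: Fp_nat_eq_modn => //.
by rewrite x_eq1 natrX Fp_nat_expr_eq1 // (dvdn_trans dvd_e2) // dvdn_exp2l.
Qed.

Section PowerResidue.

Variables p q : nat.
Hypotheses (p_prime : prime p) (q_prime : prime q) (q_dvd_pred : q %| p.-1).

(* Euler's criterion: for p not dividing n, this says that n is a q-th power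
   modulo p. *)
Definition power_residue n := ((n%:R : 'F_p) ^+ (p.-1 %/ q) == 1)%R.

Lemma power_residue_addn n : power_residue (n + p) = power_residue n.
Proof. by rewrite /power_residue Fp_nat_addn. Qed.

Lemma power_residue_expn n e : ~~ (q %| e) -> ~~ (p %| n) ->
  power_residue (n ^ e) = power_residue n.
Proof.
move=> q_ndvd_e p_ndvd_n.
rewrite /power_residue natrX exprAC (@expr_coprime_eq1 _ _ q) ?prime_gt0 //.
  by rewrite prime_coprime.
by rewrite -exprM divnK // Fp_nat_expr_eq1.
Qed.

Lemma exists_power_residue b :
  exists n, [/\ 2 <= n, ~~ (p %| n) & power_residue n = b].
Proof.
have p_gt1 := prime_gt1 p_prime.
case: b.
  exists p.+1; split; first exact: ltnW.
    by rewrite -addn1 dvdn_addr // gtnNdvd.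
  by rewrite -add1n power_residue_addn /power_residue expr1n eqxx.
have pred_gt0 : 0 < p.-1 by rewrite -subn1 subn_gt0.
have k_gt0 : 0 < p.-1 %/ q by rewrite divn_gt0 ?prime_gt0 // dvdn_leq.
have k_lt : p.-1 %/ q < #|'F_p|.-1 by rewrite card_Fp // ltn_Pdiv ?prime_gt1.
have [x x_neq0 x_not] := exists_expf_neq1 (introT andP (conj k_gt0 k_lt)).
move: (nat_of_ord x) (natr_Zp x) => n def_x.
rewrite -def_x Fp_nat_eq0 // in x_neq0 x_not.
exists n; split=> //; last exact: negbTE.
by case: n {def_x} x_neq0 x_not => [|[|n]] //; rewrite ?dvdn0 ?expr1n ?eqxx.
Qed.

Lemma S_power_residue e r n : 0 < e -> ~~ (q %| e) -> ~~ (p %| r) ->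
  S p e r n -> power_residue n = power_residue r.
Proof.
move=> e_gt0 q_ndvd_e p_ndvd_r S_n.
pose T m := [/\ 0 < m, ~~ (p %| m) & power_residue m = power_residue r].
suff /S_n[_ _ ->] : closed_set p e r T by [].
rewrite /T; split.
- by move=> m [].
- by split; rewrite // lt0n; apply: contraNneq p_ndvd_r => ->.
- move=> m m_gt0 [_ p_ndvd_mX res_mX]; have p_ndvd_m : ~~ (p %| m).
    by apply: contra p_ndvd_mX => p_dvd_m; rewrite Euclid_dvdX // p_dvd_m e_gt0.
  by rewrite -(power_residue_expn q_ndvd_e p_ndvd_m).
- move=> m [m_gt0 p_ndvd_m res_m]; have p_ndvd_mp : ~~ (p %| m + p).
    by rewrite dvdn_addl.
  split; first by rewrite expn_gt0 addn_gt0 m_gt0.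
    by rewrite Euclid_dvdX // negb_and p_ndvd_mp.
  by rewrite power_residue_expn // power_residue_addn.
Qed.

End PowerResidue.

Lemma squarefree_prime_ndvd m e : squarefree m -> 0 < e < m ->
  exists q, [/\ prime q, q %| m & ~~ (q %| e)].
Proof.
move=> sf_m /andP[e_gt0 e_lt_m]; set g := gcdn m e; set d := m %/ g.
have g_dvd_m : g %| m := dvdn_gcdl m e.
have def_m : m = d * g by rewrite divnK.
have d_gt1 : 1 < d.
  rewrite ltnNge; apply: contraL e_lt_m => d_le1.
  rewrite -leqNgt def_m (leq_trans (leq_mul d_le1 (leqnn g))) // mul1n.
  by rewrite dvdn_leq // dvdn_gcdr.
exists (pdiv d); split; first exact: pdiv_prime.
  by rewrite def_m dvdn_mulr // pdiv_dvd.
apply: contra (sf_m _ (prime_gt1 (pdiv_prime d_gt1))) => q_dvd_e.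
by rewrite def_m expnS expn1 dvdn_mul ?pdiv_dvd // dvdn_gcd q_dvd_e
  (dvdn_trans (pdiv_dvd d)) // dvdn_div.
Qed.

Lemma not_squarefree_dvd_sqr m : 0 < m -> ~ squarefree m ->
  exists e, [/\ 1 < e, e < m & m %| e ^ 2].
Proof.
move=> m_gt0 not_sf.
have [d [d_gt1 /dvdnP[c def_m]]] : exists d, 1 < d /\ d ^ 2 %| m.
  apply: NNPP => no_d; apply: not_sf => d d_gt1; apply/negP => d2_dvd_m.
  by apply: no_d; exists d.
have c_gt0 : 0 < c by move: m_gt0; rewrite def_m muln_gt0 => /andP[].
exists (c * d); split; try nia.
by apply/dvdnP; exists c; rewrite def_m; nia.
Qed.

Theorem corollary22 (p r : nat) :
  prime p -> 2 <= r -> ~~ (p %| r) ->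
  ((exists e, 2 <= e <= p - 2 /\
      (forall n, S p e r n <-> (2 <= n /\ ~~ (p %| n))))
   <-> ~ squarefree (p - 1)).
Proof.
move=> p_pr r_ge2 p_ndvd_r; rewrite subn1 subn2.
have p_gt1 := prime_gt1 p_pr.
split=> [[e [/andP[e_ge2 e_le] S_eq]] sf | not_sf].
  have [|q [q_pr q_dvd q_ndvd_e]] := squarefree_prime_ndvd sf (e := e); first lia.
  have [n [n_ge2 p_ndvd_n res_n]] :=
    exists_power_residue p_pr q_pr q_dvd (~~ power_residue p q r).
  have S_n : S p e r n by apply/S_eq.
  have := S_power_residue p_pr q_pr q_dvd (ltnW e_ge2) q_ndvd_e p_ndvd_r S_n.
  by rewrite res_n; case: power_residue.
have [|e [e_gt1 e_lt dvd_e2]] := not_squarefree_dvd_sqr _ not_sf; first lia.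
exists e; split=> [|n]; first lia.
split; first exact: S_ge2_ndvd (ltnW e_gt1) r_ge2 p_ndvd_r.
by case; apply: ge2_ndvd_S.
Qed.
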